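(* Let $\tau$ be a tau-function of the extended bigraded Toda hierarchy with wave operators $W,\bar W$. For every $n\ge1$, $$-\frac{\bigl((L^{\frac{-n}{k}})_-W\bigr)z^s}{Wz^s}=G(z)(nt_n)-nt_n,\qquad \frac{\bigl((L^{\frac{-n}{k}})_+\bar W\bigr)z^s}{\bar Wz^s}=\bar G(z)(nt_n)-nt_n,$$ and $$-\frac{\bigl((L^{\frac{-n}{m}})_-W\bigr)z^s}{Wz^s}=G(z)(n\bar t_n)-n\bar t_n,\qquad \frac{\bigl((L^{\frac{-n}{m}})_+\bar W\bigr)z^s}{\bar Wz^s}=\bar G(z)(n\bar t_n)-n\bar t_n.$$ That is, the vector fields on tau-functions induced by $\partial^*_{L^{\frac{-n}{k}}}$ and $\partial^*_{L^{\frac{-n}{m}}}$ are multiplication by $nt_n$ and $n\bar t_n$, respectively, up to adding a function from $\mathcal F$.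
   Context: Let $s$ be a variable, $\Lambda$ the shift $(\Lambda f)(s)=f(s+1)$, $\mathcal A$ the space of formal difference operators $\sum_{i\in\mathbb Z}a_i(s)\Lambda^i$, $A_+=\sum_{i\ge0}a_i\Lambda^i$, $A_-=\sum_{i<0}a_i\Lambda^i$, products $(a(s)\Lambda^i)(b(s)\Lambda^j)=a(s)b(s+i)\Lambda^{i+j}$ where defined; operators act on $z^s$ by $(a(s)\Lambda^i)z^s=a(s)z^iz^s$. Fix $k,m\ge1$. Variables: $s=x_0$, $\mathbf x=(x_1,\dots)$, $\mathbf t=(t_1,\dots)$, $\bar{\mathbf t}=(\bar t_1,\dots)$, with $t_{nk}$ and $\bar t_{nm}$ distinct. Let $[z]=(z,z^2/2,z^3/3,\dots)$; for a function $g(s,\mathbf t,\bar{\mathbf t},\mathbf x)$ put $G(z)g=g(s,\mathbf t-[z^{-1}],\bar{\mathbf t},\mathbf x)$, $\bar G(z)g=g(s+1,\mathbf t,\bar{\mathbf t}+[z],\mathbf x)$. A tau-function of the EBTH is a function $\tau(s,\mathbf t,\bar{\mathbf t},\mathbf x)$ such that, writing $G(z)\tau/\tau=1+\sum_{i\ge1}w_iz^{-i}$, $\bar G(z)\tau/\tau=\sum_{i\ge0}\bar w_iz^i$, the operators $W=1+\sum w_i\Lambda^{-i}$, $\bar W=\sum\bar w_i\Lambda^i$ ($\bar w_0\ne0$) satisfy $W\Lambda^kW^{-1}=\bar W\Lambda^{-m}\bar W^{-1}=:L$ with $L=\Lambda^k+\dots+u_{-m}\Lambda^{-m}$ ($u_{-m}\ne0$)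 and the EBTH flows $\partial_{t_n}W=-(L^{\frac nk})_-W$, $\partial_{t_n}\bar W=(L^{\frac nk})_+\bar W$, $\partial_{\bar t_n}W=-(L^{\frac nm})_-W$, $\partial_{\bar t_n}\bar W=(L^{\frac nm})_+\bar W$, $\partial_{x_n}W=-(2L^n\log L)_-W$, $\partial_{x_n}\bar W=(2L^n\log L)_+\bar W$, where $L^{\frac nk}:=W\Lambda^nW^{-1}$, $L^{\frac nm}:=\bar W\Lambda^{-n}\bar W^{-1}$ ($n\in\mathbb Z$) and $\log L=\frac12W\partial_sW^{-1}-\frac12\bar W\partial_s\bar W^{-1}$. For a difference operator $a$ commuting with $L$, $\partial^*_a$ denotes the symmetry $W\mapsto-a_-W$, $\bar W\mapsto a_+\bar W$. $\mathcal F$ is the space of functions $f(s,\mathbf x)$ with $f(s+1,\mathbf x)=f(s,\mathbf x)$. *)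

From HB Require Import structures.
From mathcomp Require Import all_boot all_order all_algebra.
From mathcomp Require Import all_classical all_reals all_analysis.
Set Implicit Arguments. Unset Strict Implicit. Unset Printing Implicit Defensive.
Import Order.TTheory GRing.Theory Num.Theory.
Local Open Scope ring_scope.
Local Open Scope classical_set_scope.

Section EBTH.
Variable R : realType.

(* A point: s = x_0, t = (t_1,t_2,...), tb = (tbar_1,...), x = (x_1,...).
   The sequences are indexed by nat; index 0 of t, tb, x is unused. *)
Record pt := Pt { ps : R; pt_t : nat -> R; pt_tb : nat -> R; pt_x : nat -> R }.

Definition fn := pt -> R.

(* formal difference operator  sum_{i in Z} a_i Lambda^i : i |-> a_i *)
Definition op := int -> fn.
(* formal series sum_{i in Z} c_i z^i, c_i functions : i |-> c_i *)
Definition fser := int -> fn.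

Definition shiftp (i : int) (p : pt) : pt :=
  Pt (ps p + i%:~R) (pt_t p) (pt_tb p) (pt_x p).

Definition Lam (i : int) : op := fun j _ => if j == i then 1 else 0.
Definition op_add (a b : op) : op := fun i p => a i p + b i p.
Definition op_opp (a : op) : op := fun i p => - a i p.
Definition op_scale (c : R) (a : op) : op := fun i p => c * a i p.
Definition op_plus (a : op) : op := fun i p => if 0 <= i then a i p else 0.
Definition op_minus (a : op) : op := fun i p => if i < 0 then a i p else 0.

(* (a_i Lambda^i)(b_j Lambda^j) = a_i(s) b_j(s+i) Lambda^(i+j); the product is
   the (pointwise finite) sum; it is only used where it is defined, i.e. where
   the sum is finite (bounded-above x bounded-above, bounded-below x
   bounded-below, or one factor finite). *)
Definition op_mul (a b : op) : op := fun l p =>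
  \sum_(i \in [set i : int | a i p != 0 /\ b (l - i) (shiftp i p) != 0])
     (a i p * b (l - i) (shiftp i p)).

Definition op_pow (a : op) (n : nat) : op := iter n (op_mul a) (Lam 0).

Definition bnd_above (a : op) := exists N : int, forall i p, N < i -> a i p = 0.
Definition bnd_below (a : op) := exists N : int, forall i p, i < N -> a i p = 0.

Definition op_D (D : fn -> fn) (a : op) : op := fun i => D (a i).

(* action on z^s: (sum a_i Lambda^i) z^s = z^s * sum_i a_i z^i; we record the
   formal series sum_i a_i z^i, i.e. (a z^s)/z^s *)
Definition op_zs (a : op) : fser := fun i p => a i p.

Definition fs_mul (c d : fser) : fser := fun l p =>
  \sum_(i \in [set i : int | c i p != 0 /\ d (l - i) p != 0]) (c i p * d (l - i) p).
Definition fs_sub (c d : fser) : fser := fun i p => c i p - d i p.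
Definition fs_opp (c : fser) : fser := fun i p => - c i p.
Definition fs_const (g : fn) : fser := fun i p => if i == 0 then g p else 0.

Definition upd (f : nat -> R) (n : nat) (h : R) : nat -> R :=
  fun j => if j == n then f j + h else f j.
Definition ds (f : fn) : fn := fun p =>
  derive1 (fun h : R => f (Pt (ps p + h) (pt_t p) (pt_tb p) (pt_x p))) 0.
Definition dt (n : nat) (f : fn) : fn := fun p =>
  derive1 (fun h : R => f (Pt (ps p) (upd (pt_t p) n h) (pt_tb p) (pt_x p))) 0.
Definition dtb (n : nat) (f : fn) : fn := fun p =>
  derive1 (fun h : R => f (Pt (ps p) (pt_t p) (upd (pt_tb p) n h) (pt_x p))) 0.
Definition dx (n : nat) (f : fn) : fn := fun p =>
  derive1 (fun h : R => f (Pt (ps p) (pt_t p) (pt_tb p) (upd (pt_x p) n h))) 0.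

(* Elementary Schur polynomials p_k applied to commuting derivations:
   sum_k p_k(y) lam^k = exp(sum_j y_j lam^j), computed by the recursion
   k p_k = sum_{j=1}^k (j y_j) p_{k-j}; here d j plays the role of j*y_j. *)
Fixpoint schur_tab (d : nat -> fn -> fn) (g : fn) (k : nat) : seq fn :=
  if k is k'.+1 then
    let s := schur_tab d g k' in
    rcons s (fun p => (k%:R)^-1 * \sum_(j < k) d j.+1 (nth g s (k' - j)) p)
  else [:: g].
Definition schur_coef (d : nat -> fn -> fn) (g : fn) (k : nat) : fn :=
  nth g (schur_tab d g k) k.

(* G(z) g = g(s, t - [z^-1], tbar, x) = exp(- sum_j z^-j/j d/dt_j) g,
   as a formal series in z^-1 (coefficient of z^i, i <= 0) *)
Definition Gser (g : fn) : fser := fun i =>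
  if i <= 0 then schur_coef (fun j f p => - dt j f p) g `|i|%N else (fun _ => 0).
(* Gbar(z) g = g(s+1, t, tbar + [z], x), formal series in z (i >= 0) *)
Definition Gbser (g : fn) : fser := fun i =>
  if 0 <= i then (fun p => schur_coef dtb g `|i|%N (shiftp 1 p)) else (fun _ => 0).

(* wave operators of tau:  W = 1 + sum w_i Lambda^-i with G(z)tau/tau = 1 + sum w_i z^-i,
   Wbar = sum wb_i Lambda^i with Gbar(z)tau/tau = sum wb_i z^i *)
Definition W_of (tau : fn) : op := fun i p => Gser tau i p / tau p.
Definition Wb_of (tau : fn) : op := fun i p => Gbser tau i p / tau p.

(* L^(n/k) := W Lambda^n W^-1,  L^(n/m) := Wbar Lambda^-n Wbar^-1 *)
Definition Lk (W Winv : op) (n : int) : op := op_mul (op_mul W (Lam n)) Winv.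
Definition Lm (Wb Wbinv : op) (n : int) : op := op_mul (op_mul Wb (Lam (- n))) Wbinv.

(* log L = 1/2 W d_s W^-1 - 1/2 Wbar d_s Wbar^-1
         = 1/2 W (d_s W^-1) - 1/2 Wbar (d_s Wbar^-1)  (the d_s terms cancel) *)
Definition logL (W Winv Wb Wbinv : op) : op :=
  op_add (op_scale (1/2) (op_mul W (op_D ds Winv)))
         (op_scale (- (1/2)) (op_mul Wb (op_D ds Wbinv))).

Definition is_EBTH_tau (k m : nat) (tau : fn) (Winv Wbinv : op) : Prop :=
  let W := W_of tau in
  let Wb := Wb_of tau in
  let L := Lk W Winv k%:Z in
  let B (n : nat) := op_scale 2 (op_mul (op_pow L n) (logL W Winv Wb Wbinv)) in
  [/\ (forall p, tau p != 0) /\ (forall p, Wb 0 p != 0),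
      [/\ op_mul W Winv = Lam 0, op_mul Winv W = Lam 0 & bnd_above Winv],
      [/\ op_mul Wb Wbinv = Lam 0, op_mul Wbinv Wb = Lam 0 & bnd_below Wbinv],
      [/\ L = Lm Wb Wbinv m%:Z,
          (forall i p, (k%:Z < i) \/ (i < - m%:Z) -> L i p = 0),
          (forall p, L k%:Z p = 1) &
          (exists p, L (- m%:Z) p != 0)] &
      (forall n : nat, (0 < n)%N ->
        [/\ op_D (dt n) W = op_opp (op_mul (op_minus (Lk W Winv n%:Z)) W)
             /\ op_D (dt n) Wb = op_mul (op_plus (Lk W Winv n%:Z)) Wb,
            op_D (dtb n) W = op_opp (op_mul (op_minus (Lm Wb Wbinv n%:Z)) W)
             /\ op_D (dtb n) Wb = op_mul (op_plus (Lm Wb Wbinv n%:Z)) Wb &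
            op_D (dx n) W = op_opp (op_mul (op_minus (B n)) W)
             /\ op_D (dx n) Wb = op_mul (op_plus (B n)) Wb])].

Definition ntn (n : nat) : fn := fun p => n%:R * pt_t p n.
Definition ntbn (n : nat) : fn := fun p => n%:R * pt_tb p n.

End EBTH.

From HB Require Import structures.
From mathcomp Require Import all_boot all_order all_algebra.
From mathcomp Require Import all_classical all_reals all_analysis.
From mathcomp Require Import zify.
Set Implicit Arguments. Unset Strict Implicit. Unset Printing Implicit Defensive.
Import Order.TTheory GRing.Theory Num.Theory.
Local Open Scope ring_scope.
Local Open Scope classical_set_scope.

(* W = 1 + O(Lambda^-1) and Wbar = wbar_0 + O(Lambda) with wbar_0 invertible, so W^-1 and
   Wbar^-1 are supported in the same half-lines.  Hence L^(-n/k) = W Lambda^-n W^-1 only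
   has terms of degree <= -n and L^(-n/m) = Wbar Lambda^n Wbar^-1 only terms of degree
   >= n: (L^(-n/k))_- W = W Lambda^-n, (L^(-n/m))_+ Wbar = Wbar Lambda^n, and the other
   two projections vanish.  Acting on z^s these give z^-n W z^s and z^n Wbar z^s.  On the
   other side G(z) shifts t_n by -z^-n/n and Gbar(z) shifts tbar_n by z^n/n, so
   G(z)(n t_n) - n t_n = -z^-n and Gbar(z)(n tbar_n) - n tbar_n = z^n, while the two
   mixed differences vanish. *)

Section DifferenceOperators.
Variable R : realType.
Implicit Types (a b c v w : op R) (e f : fser R) (p : pt R).

Lemma fsbig_window (F : int -> R) (S : set int) (lo : int) (N : nat) :
  (forall i, S i -> lo <= i < lo + N%:Z) -> (forall i, ~ S i -> F i = 0) ->
  \sum_(i \in S) F i = \sum_(k < N) F (lo + k%:Z).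
Proof.
move=> inS outS.
rewrite (fsbig_fwiden [seq lo + k%:Z | k <- iota 0 N]) //.
- by rewrite big_map -(big_mkord xpredT (fun k => F (lo + k%:Z))) /index_iota subn0.
- move=> i /inS /andP[lo_i i_hi] /=; apply/mapP; exists `|i - lo|%N.
    by rewrite mem_iota add0n; lia.
  lia.
- by rewrite map_inj_uniq ?iota_uniq // => x y /addrI [].
- by move=> i [_ /outS].
Qed.

Lemma op_mul_window a b l p (lo : int) (N : nat) :
  (forall i, a i p != 0 -> b (l - i) (shiftp i p) != 0 -> lo <= i < lo + N%:Z) ->
  op_mul a b l p =
    \sum_(k < N) a (lo + k%:Z) p * b (l - (lo + k%:Z)) (shiftp (lo + k%:Z) p).
Proof.
move=> win; apply: fsbig_window => [i [] //|i]; first exact: win.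
by move/not_andP => [] /negP; rewrite negbK => /eqP ->; rewrite ?mul0r ?mulr0.
Qed.

Lemma fs_mul_window e f l p (lo : int) (N : nat) :
  (forall i, e i p != 0 -> f (l - i) p != 0 -> lo <= i < lo + N%:Z) ->
  fs_mul e f l p = \sum_(k < N) e (lo + k%:Z) p * f (l - (lo + k%:Z)) p.
Proof.
move=> win; apply: fsbig_window => [i [] //|i]; first exact: win.
by move/not_andP => [] /negP; rewrite negbK => /eqP ->; rewrite ?mul0r ?mulr0.
Qed.

Lemma shiftpD (i j : int) p : shiftp i (shiftp j p) = shiftp (j + i) p.
Proof. by rewrite /shiftp /= -addrA -intrD. Qed.

Lemma op_mul_Lam a (d : int) : op_mul a (Lam d) = fun l => a (l - d).
Proof.
apply: funext => l; apply: funext => p.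
rewrite (op_mul_window (lo := l - d) (N := 1)) => [|i _]; rewrite /Lam.
  rewrite big_ord1 addr0; have -> : l - (l - d) = d by lia.
  by rewrite eqxx mulr1.
by case: ifP => [/eqP <- _|_]; [lia | rewrite eqxx].
Qed.

Lemma op_mul0l b : op_mul (fun _ _ => 0) b = fun _ _ => 0.
Proof.
apply: funext => l; apply: funext => p.
by rewrite (op_mul_window (lo := 0) (N := 0)) ?big_ord0 // => i; rewrite eqxx.
Qed.

Definition supp_le a (N : int) := forall i p, N < i -> a i p = 0.
Definition supp_ge a (N : int) := forall i p, i < N -> a i p = 0.

Lemma supp_leP a N i p : supp_le a N -> a i p != 0 -> i <= N.
Proof. by move=> aN; apply: contraR; rewrite -ltNge => /aN ->; rewrite eqxx. Qed.

Lemma supp_geP a N i p : supp_ge a N -> a i p != 0 -> N <= i.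
Proof. by move=> aN; apply: contraR; rewrite -ltNge => /aN ->; rewrite eqxx. Qed.

Lemma supp_le_Lam (d : int) : supp_le (Lam d) d.
Proof. by move=> i p di; rewrite /Lam gt_eqF. Qed.

Lemma supp_ge_Lam (d : int) : supp_ge (Lam d) d.
Proof. by move=> i p id; rewrite /Lam lt_eqF. Qed.

Lemma supp_le_mul a b (A B : int) :
  supp_le a A -> supp_le b B -> supp_le (op_mul a b) (A + B).
Proof.
move=> aA bB l p ABl.
rewrite (op_mul_window (lo := 0) (N := 0)) ?big_ord0 // => i ai bi.
by have := supp_leP aA ai; have := supp_leP bB bi; lia.
Qed.

Lemma supp_ge_mul a b (A B : int) :
  supp_ge a A -> supp_ge b B -> supp_ge (op_mul a b) (A + B).
Proof.
move=> aA bB l p lAB.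
rewrite (op_mul_window (lo := 0) (N := 0)) ?big_ord0 // => i ai bi.
by have := supp_geP aA ai; have := supp_geP bB bi; lia.
Qed.

(* [op_mul] sums over the set of nonvanishing terms; an identity between products is
   proved by confining every summation index to one finite window.  The window
   conditions for the inner sums are only needed when the outer factor is nonzero. *)
Lemma op_mulA_window a b c l p (lo : int) (N : nat) :
  (forall i, op_mul a b i p != 0 -> c (l - i) (shiftp i p) != 0 ->
     lo <= i < lo + N%:Z) ->
  (forall i j, c (l - i) (shiftp i p) != 0 -> a j p != 0 ->
     b (i - j) (shiftp j p) != 0 -> lo <= j < lo + N%:Z) ->
  (forall j, a j p != 0 -> op_mul b c (l - j) (shiftp j p) != 0 ->
     lo <= j < lo + N%:Z) ->
  (forall j i, a j p != 0 -> b i (shiftp j p) != 0 ->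
     c (l - j - i) (shiftp i (shiftp j p)) != 0 -> lo <= j + i < lo + N%:Z) ->
  op_mul (op_mul a b) c l p = op_mul a (op_mul b c) l p.
Proof.
move=> abc_win ab_win a_bc_win bc_win.
rewrite (op_mul_window abc_win) (op_mul_window a_bc_win).
pose x k := lo + k%:Z.
transitivity (\sum_(k < N) \sum_(k' < N)
  a (x k') p * b (x k - x k') (shiftp (x k') p) * c (l - x k) (shiftp (x k) p)).
  apply: eq_bigr => k _; have [->|ck] := eqVneq (c (l - x k) (shiftp (x k) p)) 0.
    by rewrite mulr0 big1 // => k' _; rewrite mulr0.
  by rewrite (op_mul_window (ab_win _ ^~ ck)) mulr_suml.
rewrite exchange_big /=; apply: eq_bigr => k' _.
have [->|ak'] := eqVneq (a (x k') p) 0.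
  by rewrite mul0r big1 // => k _; rewrite !mul0r.
rewrite (op_mul_window (lo := lo - x k') (N := N)); last first.
  by move=> i bi ci; have := bc_win _ _ ak' bi ci; rewrite /x; lia.
rewrite mulr_sumr; apply: eq_bigr => k _; rewrite shiftpD -mulrA.
have -> : lo - x k' + k%:Z = x k - x k' by rewrite /x; lia.
have -> : l - (lo + k'%:Z) - (x k - x k') = l - x k by rewrite /x; lia.
by have -> : lo + k'%:Z + (x k - x k') = x k by rewrite /x; lia.
Qed.

Lemma op_mulA_supp_le a b c (A B C : int) :
  supp_le a A -> supp_le b B -> supp_le c C ->
  op_mul (op_mul a b) c = op_mul a (op_mul b c).
Proof.
move=> aA bB cC; apply: funext => l; apply: funext => p.
have abAB := supp_le_mul aA bB; have bcBC := supp_le_mul bB cC.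
pose lo := l - C - (absz B)%:Z; pose hi := A + (absz B)%:Z.
apply: (op_mulA_window (lo := lo) (N := (absz (hi - lo)).+1)); rewrite /lo /hi.
- by move=> i /(supp_leP abAB) ? /(supp_leP cC) ?; lia.
- by move=> i j /(supp_leP cC) ? /(supp_leP aA) ? /(supp_leP bB) ?; lia.
- by move=> j /(supp_leP aA) ? /(supp_leP bcBC) ?; lia.
- by move=> j i /(supp_leP aA) ? /(supp_leP bB) ? /(supp_leP cC) ?; lia.
Qed.

Lemma op_mulA_supp_ge a b c (A B C : int) :
  supp_ge a A -> supp_ge b B -> supp_ge c C ->
  op_mul (op_mul a b) c = op_mul a (op_mul b c).
Proof.
move=> aA bB cC; apply: funext => l; apply: funext => p.
have abAB := supp_ge_mul aA bB; have bcBC := supp_ge_mul bB cC.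
pose lo := A - (absz B)%:Z; pose hi := l - C + (absz B)%:Z.
apply: (op_mulA_window (lo := lo) (N := (absz (hi - lo)).+1)); rewrite /lo /hi.
- by move=> i /(supp_geP abAB) ? /(supp_geP cC) ?; lia.
- by move=> i j /(supp_geP cC) ? /(supp_geP aA) ? /(supp_geP bB) ?; lia.
- by move=> j /(supp_geP aA) ? /(supp_geP bcBC) ?; lia.
- by move=> j i /(supp_geP aA) ? /(supp_geP bB) ? /(supp_geP cC) ?; lia.
Qed.

Lemma op_minus_id a : supp_le a (-1) -> op_minus a = a.
Proof.
move=> a_neg; apply: funext => i; apply: funext => p; rewrite /op_minus.
by case: ltP => // i_ge0; rewrite a_neg //; lia.
Qed.

Lemma op_plus0 a : supp_le a (-1) -> op_plus a = fun _ _ => 0.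
Proof.
move=> a_neg; apply: funext => i; apply: funext => p; rewrite /op_plus.
by case: leP => // i_ge0; rewrite a_neg //; lia.
Qed.

Lemma op_plus_id a : supp_ge a 0 -> op_plus a = a.
Proof.
move=> a_pos; apply: funext => i; apply: funext => p; rewrite /op_plus.
by case: leP => // i_lt0; rewrite a_pos.
Qed.

Lemma op_minus0 a : supp_ge a 0 -> op_minus a = fun _ _ => 0.
Proof.
move=> a_pos; apply: funext => i; apply: funext => p; rewrite /op_minus.
by case: ltP => // i_lt0; rewrite a_pos.
Qed.

(* Downward induction from a bound of v: the top coefficient of v w is v_j w_0. *)
Lemma supp_le_inv v w :
  bnd_above v -> supp_le w 0 -> (forall p, w 0 p != 0) -> op_mul v w = Lam 0 ->
  supp_le v 0.
Proof.
move=> [N vN] w_le0 w0_neq0 vw1 j p j_gt0.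
suff vanish : forall (d : nat) i, N - d%:Z < i -> 0 < i -> v i p = 0.
  by apply: (vanish (absz N)) => //; lia.
elim=> [|d IHd] i Ni i_gt0; first by apply: vN; lia.
have [Ndi|i_le] := ltP (N - d%:Z) i; first exact: IHd.
have := congr1 (fun f => f i p) vw1; rewrite /Lam gt_eqF //.
rewrite (op_mul_window (lo := i) (N := 1)) => [|i' vi' wi'].
  rewrite big_ord1 addr0 subrr => /eqP.
  by rewrite mulf_eq0 (negbTE (w0_neq0 _)) orbF => /eqP.
have : ~ i < i' by move=> ii'; move: vi'; rewrite IHd ?eqxx //; lia.
by have := supp_leP w_le0 wi'; lia.
Qed.

Lemma supp_ge_inv v w :
  bnd_below v -> supp_ge w 0 -> (forall p, w 0 p != 0) -> op_mul v w = Lam 0 ->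
  supp_ge v 0.
Proof.
move=> [N vN] w_ge0 w0_neq0 vw1 j p j_lt0.
suff vanish : forall (d : nat) i, i < N + d%:Z -> i < 0 -> v i p = 0.
  by apply: (vanish (absz N)) => //; lia.
elim=> [|d IHd] i iN i_lt0; first by apply: vN; lia.
have [iNd|i_ge] := ltP i (N + d%:Z); first exact: IHd.
have := congr1 (fun f => f i p) vw1; rewrite /Lam lt_eqF //.
rewrite (op_mul_window (lo := i) (N := 1)) => [|i' vi' wi'].
  rewrite big_ord1 addr0 subrr => /eqP.
  by rewrite mulf_eq0 (negbTE (w0_neq0 _)) orbF => /eqP.
have : ~ i' < i by move=> i'i; move: vi'; rewrite IHd ?eqxx //; lia.
by have := supp_geP w_ge0 wi'; lia.
Qed.

Lemma op_mul_cancel_le a v w (A B C : int) :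
  supp_le a A -> supp_le v B -> supp_le w C -> op_mul v w = Lam 0 ->
  op_mul (op_mul a v) w = a.
Proof.
move=> aA vB wC vw1; rewrite (op_mulA_supp_le aA vB wC) vw1 op_mul_Lam.
by apply: funext => l; rewrite subr0.
Qed.

Lemma op_mul_cancel_ge a v w (A B C : int) :
  supp_ge a A -> supp_ge v B -> supp_ge w C -> op_mul v w = Lam 0 ->
  op_mul (op_mul a v) w = a.
Proof.
move=> aA vB wC vw1; rewrite (op_mulA_supp_ge aA vB wC) vw1 op_mul_Lam.
by apply: funext => l; rewrite subr0.
Qed.

Lemma fs_mul0l f : fs_mul (fun _ _ => 0) f = fun _ _ => 0.
Proof.
apply: funext => l; apply: funext => p.
by rewrite (fs_mul_window (lo := 0) (N := 0)) ?big_ord0 // => i; rewrite eqxx.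
Qed.

Lemma fs_mul_single f (d : int) (x : R) :
  fs_mul (fun i _ => if i == d then x else 0) f = fun l p => x * f (l - d) p.
Proof.
apply: funext => l; apply: funext => p.
rewrite (fs_mul_window (lo := d) (N := 1)) => [|i]; first by rewrite big_ord1 addr0 eqxx.
by case: ifP => [/eqP -> _ _|_]; [lia | rewrite eqxx].
Qed.

End DifferenceOperators.

Section SchurCoefficients.
Variables (R : realType) (d : nat -> fn R -> fn R) (g : fn R).

Lemma size_schur_tab k : size (schur_tab d g k) = k.+1.
Proof. by elim: k => //= k IHk; rewrite size_rcons IHk. Qed.

Lemma nth_schur_tab k i : (i <= k)%N -> nth g (schur_tab d g k) i = schur_coef d g i.
Proof.
elim: k => [|k IHk] ik; first by move: ik; rewrite leqn0 => /eqP ->.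
have [ik'|] := ltnP i k.+1; first by rewrite /= nth_rcons size_schur_tab ik' IHk.
by move=> ki; have -> : i = k.+1 by apply/eqP; rewrite eqn_leq ik.
Qed.

Lemma schur_coef0 : schur_coef d g 0 = g.
Proof. by []. Qed.

Lemma schur_coefS k :
  schur_coef d g k.+1 =
  fun p => (k.+1%:R)^-1 * \sum_(j < k.+1) d j.+1 (schur_coef d g (k - j)) p.
Proof.
rewrite {1}/schur_coef /= nth_rcons size_schur_tab ltnn eqxx.
apply: funext => p; congr (_ * _); apply: eq_bigr => j _.
by rewrite nth_schur_tab // leq_subr.
Qed.

Lemma schur_coef_lin (a : nat -> R) :
  (forall j x, d j.+1 (fun _ => x) = fun _ => 0) -> (forall j, d j.+1 g = fun _ => a j) ->
  forall k, schur_coef d g k.+1 = fun _ => (k.+1%:R)^-1 * a k.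
Proof.
move=> d_cst dg; elim/ltn_ind => k IHk; rewrite schur_coefS.
apply: funext => p; congr (_ * _).
rewrite big_ord_recr /= subnn schur_coef0 dg big1 ?add0r // => j _.
have j_lt := ltn_ord j; have -> : (k - j = (k - j.+1).+1)%N by lia.
by rewrite IHk ?d_cst //; lia.
Qed.

End SchurCoefficients.

Section VertexOperators.
Variable R : realType.
Implicit Types (g : fn R) (c : nat -> R).

Lemma derive1_affine (c x : R) : derive1 (fun h : R => c * (x + h)) 0 = c.
Proof.
rewrite derive1E (_ : (fun h => c * (x + h)) = (fun h => c * x + c * h)); last first.
  by apply: funext => h; rewrite mulrDr.
rewrite deriveD //= ?deriveM ?derive_cst // derive_id.
by rewrite -![_ *: _]/(_ * _) !mulr0 mulr1 !add0r addr0.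
Qed.

Lemma dt_cst j (x : R) : dt j (fun _ : pt R => x) = fun _ => 0.
Proof. by apply: funext => p; exact: derive1_cst. Qed.

Lemma dtb_cst j (x : R) : dtb j (fun _ : pt R => x) = fun _ => 0.
Proof. by apply: funext => p; exact: derive1_cst. Qed.

Lemma dt_ntn j n : dt j (ntn (R:=R) n) = fun _ => if n == j then n%:R else 0.
Proof.
apply: funext => p; rewrite /dt /ntn /upd /=.
by case: eqP => _; [exact: derive1_affine | exact: derive1_cst].
Qed.

Lemma dtb_ntbn j n : dtb j (ntbn (R:=R) n) = fun _ => if n == j then n%:R else 0.
Proof.
apply: funext => p; rewrite /dtb /ntbn /upd /=.
by case: eqP => _; [exact: derive1_affine | exact: derive1_cst].
Qed.

Lemma dt_ntbn j n : dt j (ntbn (R:=R) n) = fun _ => 0.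
Proof. by apply: funext => p; rewrite /dt /ntbn /=; exact: derive1_cst. Qed.

Lemma dtb_ntn j n : dtb j (ntn (R:=R) n) = fun _ => 0.
Proof. by apply: funext => p; rewrite /dtb /ntn /=; exact: derive1_cst. Qed.

Lemma Gser_sub_coef g c :
  (forall j, dt j g = fun _ => c j) ->
  fs_sub (Gser g) (fs_const g) =
    fun i _ => if i < 0 then - ((absz i)%:R^-1 * c (absz i)) else 0.
Proof.
move=> dtg; apply: funext => i; apply: funext => p; rewrite /fs_sub /Gser /fs_const.
have [i_gt0|i_le0] := ltrP 0 i; first by rewrite !ifF ?subr0 //; lia.
case E: (absz i) => [|k].
  have -> : i = 0 by lia.
  by rewrite eqxx ltxx schur_coef0 subrr.
rewrite (schur_coef_lin (d := fun j f p => - dt j f p) (a := fun j => - c j.+1)).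
  by rewrite ifF ?ifT ?mulrN ?subr0 //; lia.
- by move=> j x; apply: funext => q; rewrite dt_cst oppr0.
- by move=> j; apply: funext => q; rewrite dtg.
Qed.

Lemma Gbser_sub_coef g c :
  (forall j, dtb j g = fun _ => c j) -> (forall p, g (shiftp 1 p) = g p) ->
  fs_sub (Gbser g) (fs_const g) =
    fun i _ => if 0 < i then (absz i)%:R^-1 * c (absz i) else 0.
Proof.
move=> dtbg g_per; apply: funext => i; apply: funext => p; rewrite /fs_sub /Gbser /fs_const.
have [i_lt0|i_ge0] := ltrP i 0; first by rewrite !ifF ?subr0 //; lia.
case E: (absz i) => [|k].
  have -> : i = 0 by lia.
  by rewrite eqxx ltxx schur_coef0 g_per subrr.
rewrite (schur_coef_lin (d := @dtb R) (a := c \o succn)).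
  by rewrite ifF ?ifT ?subr0 //; lia.
- by move=> j x; rewrite dtb_cst.
- by move=> j; rewrite dtbg.
Qed.

Lemma Gser_ntn_sub n : (0 < n)%N ->
  fs_sub (Gser (ntn n)) (fs_const (ntn n)) =
    fun i (_ : pt R) => if i == - n%:Z then -1 else 0.
Proof.
move=> n_gt0.
rewrite (Gser_sub_coef (c := fun j => if n == j then n%:R else 0)) => [|j].
  apply: funext => i; apply: funext => _; have [->|i_ne] := eqVneq i (- n%:Z).
    by rewrite oppr_lt0 ltz_nat n_gt0 abszN absz_nat eqxx mulVf ?pnatr_eq0 -?lt0n.
  by case: ifP => // i_lt0; rewrite ifF ?mulr0 ?oppr0 //; apply/eqP; lia.
exact: dt_ntn.
Qed.

Lemma Gbser_ntbn_sub n : (0 < n)%N ->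
  fs_sub (Gbser (ntbn n)) (fs_const (ntbn n)) =
    fun i (_ : pt R) => if i == n%:Z then 1 else 0.
Proof.
move=> n_gt0.
rewrite (Gbser_sub_coef (c := fun j => if n == j then n%:R else 0)) => [|j|//].
  apply: funext => i; apply: funext => _; have [->|i_ne] := eqVneq i n%:Z.
    by rewrite ltz_nat n_gt0 absz_nat eqxx mulVf ?pnatr_eq0 -?lt0n.
  by case: ifP => // i_gt0; rewrite ifF ?mulr0 //; apply/eqP; lia.
exact: dtb_ntbn.
Qed.

Lemma Gser_ntbn_sub n :
  fs_sub (Gser (ntbn n)) (fs_const (ntbn n)) = fun _ (_ : pt R) => 0.
Proof.
rewrite (Gser_sub_coef (c := fun => 0)) => [|j]; last exact: dt_ntbn.
by apply: funext => i; apply: funext => _; rewrite mulr0 oppr0 if_same.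
Qed.

Lemma Gbser_ntn_sub n :
  fs_sub (Gbser (ntn n)) (fs_const (ntn n)) = fun _ (_ : pt R) => 0.
Proof.
rewrite (Gbser_sub_coef (c := fun => 0)) => [|j|//]; last exact: dtb_ntn.
by apply: funext => i; apply: funext => _; rewrite mulr0 if_same.
Qed.

End VertexOperators.

Theorem lemma4p3 (R : realType) (k m : nat) (tau : fn R) (Winv Wbinv : op R) :
  (0 < k)%N -> (0 < m)%N ->
  is_EBTH_tau k m tau Winv Wbinv ->
  forall n : nat, (0 < n)%N ->
  let W := W_of tau in
  let Wb := Wb_of tau in
  [/\ fs_mul (fs_sub (Gser (ntn n)) (fs_const (ntn n))) (op_zs W)
        = fs_opp (op_zs (op_mul (op_minus (Lk W Winv (- n%:Z))) W)),
      fs_mul (fs_sub (Gbser (ntn n)) (fs_const (ntn n))) (op_zs Wb)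
        = op_zs (op_mul (op_plus (Lk W Winv (- n%:Z))) Wb),
      fs_mul (fs_sub (Gser (ntbn n)) (fs_const (ntbn n))) (op_zs W)
        = fs_opp (op_zs (op_mul (op_minus (Lm Wb Wbinv (- n%:Z))) W)) &
      fs_mul (fs_sub (Gbser (ntbn n)) (fs_const (ntbn n))) (op_zs Wb)
        = op_zs (op_mul (op_plus (Lm Wb Wbinv (- n%:Z))) Wb)].
Proof.
move=> _ _ [[tau_neq0 Wb0_neq0] [_ WinvW Winv_bnd] [_ WbinvWb Wbinv_bnd] _ _] n n_gt0 W Wb.
have W_le0 : supp_le W 0 by move=> i p i_gt0; rewrite /W /W_of /Gser lt_geF ?mul0r.
have Wb_ge0 : supp_ge Wb 0 by move=> i p i_lt0; rewrite /Wb /Wb_of /Gbser lt_geF ?mul0r.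
have Winv_le0 : supp_le Winv 0.
  apply: (supp_le_inv Winv_bnd W_le0 _ WinvW) => p.
  by rewrite /W /W_of /Gser lexx schur_coef0 divff ?oner_neq0.
have Wbinv_ge0 := supp_ge_inv Wbinv_bnd Wb_ge0 Wb0_neq0 WbinvWb.
have WLam_le := supp_le_mul W_le0 (supp_le_Lam (d := - n%:Z)).
have WbLam_ge := supp_ge_mul Wb_ge0 (supp_ge_Lam (d := - - n%:Z)).
have Lk_neg : supp_le (Lk W Winv (- n%:Z)) (-1).
  by move=> i p i_ge; apply: (supp_le_mul WLam_le Winv_le0); lia.
have Lm_pos : supp_ge (Lm Wb Wbinv (- n%:Z)) 0.
  by move=> i p i_lt; apply: (supp_ge_mul WbLam_ge Wbinv_ge0); lia.
have LkW := op_mul_cancel_le WLam_le Winv_le0 W_le0 WinvW.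
have LmWb := op_mul_cancel_ge WbLam_ge Wbinv_ge0 Wb_ge0 WbinvWb.
split.
- rewrite Gser_ntn_sub // fs_mul_single op_minus_id // [op_mul _ W]LkW op_mul_Lam.
  by apply: funext => l; apply: funext => p; rewrite mulN1r.
- by rewrite Gbser_ntn_sub fs_mul0l op_plus0 // op_mul0l.
- rewrite Gser_ntbn_sub fs_mul0l op_minus0 // op_mul0l.
  by apply: funext => l; apply: funext => p; rewrite /fs_opp oppr0.
- rewrite Gbser_ntbn_sub // fs_mul_single op_plus_id // [op_mul _ Wb]LmWb op_mul_Lam.
  by apply: funext => l; apply: funext => p; rewrite mul1r opprK.
Qed.
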